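(* Let $\Delta,\Lambda\in\mathcal T_b$ with $\Delta\subset\Lambda^*$, let $\gamma_\Delta,\gamma_\Lambda$ be proper oriented kernels on $\Delta$ and $\Lambda$, and put $\Gamma=\Delta\cup\Lambda$. Then: (i) $\Gamma\in\mathcal T_b$, $\Gamma_+=\Delta_+\cup\Lambda_+$ and $\Gamma_-=\Delta_-\cup\Lambda_-$; (ii) the composition $\gamma_\Gamma:=\gamma_\Delta\gamma_\Lambda$ (defined on $\mathcal F_{S\setminus\Gamma_+}$ by $\gamma_\Gamma(A,\omega)=\int\gamma_\Lambda(A,\sigma)\gamma_\Delta(d\sigma,\omega)$) is well defined and is a proper oriented kernel on $\Gamma$; (iii) if $E$ is countable, then $\gamma_\Delta\gamma_\Lambda=\gamma_\Lambda\gamma_\Delta$.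
   Context: $(S,\le)$ is a countable partially ordered set. For $x\in S$ write $x_-=\{y\in S:y<x\}$, $x_+=\{y\in S:y>x\}$. For $\Upsilon\subset S$: $\max(\Upsilon)=\{x\in\Upsilon: y\notin\Upsilon\text{ for all }y>x\}$, $\min(\Upsilon)=\{x\in\Upsilon: y\notin\Upsilon\text{ for all }y<x\}$, the past $\Upsilon_-=\{x\in S\setminus\Upsilon:\exists y\in\Upsilon,\ x<y\}$, the future $\Upsilon_+=\{x\in S\setminus\Upsilon:\exists y\in\Upsilon,\ x>y\}$, and the outer time $\Upsilon^*=\{x\in S: x\text{ is comparable with no }y\in\Upsilon\}$. Standing assumptions: for every $x\in S$, $\max(x_-)$ and $\min(x_+)$ are finite, every $y<x$ satisfies $y\le y_0<x$ for some $y_0\in\max(x_-)$, every $z>x$ satisfies $z\ge z_0>x$ for some $z_0\in\min(x_+)$; and $S$ has no minimal element. A finite set $\Lambda\subset S$ is a time box if $\Lambda_-\cap\Lambda_+=\emptyset$; $\mathcal T_b$ is the set of time boxes. $(E,\mathcal E)$ is a measurable space, $\Omega=E^S$ with product $\sigma$-algebra $\mathcal F$; $\mathcal F_\Upsilon$ is generated by coordinates in $\Upsilon$. A proper oriented kernel on $\Lambda\in\mathcal T_b$ is a map $\gamma_\Lambda:\mathcal F_{S\setminus\Lambda_+}\times\Omega\to[0,1]$ such that (a) $\gamma_\Lambda(\cdot,\omega)$ is a probability measure for each $\omega$; (b) $\gamma_\Lambda(A,\cdot)$ is $\mathcal F_{\Lambda_-\cup\Lambda^*}$-measurable for each $A\in\mathcal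 F_{S\setminus\Lambda_+}$; (c) $\gamma_\Lambda(A,\cdot)$ is $\mathcal F_{\Lambda_-}$-measurable for each $A\in\mathcal F_\Lambda$; (d) $\gamma_\Lambda(B,\omega)=\mathbf 1_B(\omega)$ for all $B\in\mathcal F_{\Lambda_-\cup\Lambda^*}$. *)

From HB Require Import structures.
From mathcomp Require Import all_boot all_order all_algebra.
From mathcomp Require Import all_classical all_reals all_analysis.
From mathcomp Require Import measurable_realfun.
Set Implicit Arguments. Unset Strict Implicit. Unset Printing Implicit Defensive.
Import Order.TTheory GRing.Theory Num.Theory.
Local Open Scope classical_set_scope.

Section PosetDefs.
Context {dS : Order.disp_t} {S : porderType dS}.
Local Open Scope order_scope.

Definition pt_past (x : S) : set S := [set y | y < x].
Definition pt_future (x : S) : set S := [set y | x < y].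

Definition maxset (U : set S) : set S :=
  [set x | U x /\ forall y, x < y -> ~ U y].
Definition minset (U : set S) : set S :=
  [set x | U x /\ forall y, y < x -> ~ U y].

Definition past (U : set S) : set S :=
  [set x | ~ U x /\ exists y, U y /\ x < y].
Definition future (U : set S) : set S :=
  [set x | ~ U x /\ exists y, U y /\ y < x].
Definition outer (U : set S) : set S :=
  [set x | forall y, U y -> ~~ (x >=< y)].

Definition standing_assumptions : Prop :=
  countable [set: S] /\
  (forall x : S,
     finite_set (maxset (pt_past x)) /\ finite_set (minset (pt_future x)) /\
     (forall y, y < x -> exists2 y0, maxset (pt_past x) y0 & y <= y0) /\
     (forall z, x < z -> exists2 z0, minset (pt_future x) z0 & z0 <= z)) /\
  (forall x : S, exists y, y < x).

Definition time_box (L : set S) : Prop :=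
  finite_set L /\ past L `&` future L = set0.
End PosetDefs.

Section Configs.
Context {dS : Order.disp_t} {S : porderType dS}
        {dE : measure_display} {E : measurableType dE}.

Definition Fgen (U : set S) : set (set (S -> E)) :=
  [set A | exists x B, U x /\ measurable B /\ A = (fun w : S -> E => w x) @^-1` B].

Definition F (U : set S) : set (set (S -> E)) := <<s Fgen U >>.

Definition OmegaF (U : set S) := g_sigma_algebraType (Fgen U).

Definition okernel (R : realType) (L : set S) :=
  (S -> E) -> probability (OmegaF (~` future L)) R.

(* proper oriented kernel: conditions (b), (c), (d); (a) is built in the type *)
Definition proper_okernel (R : realType) (L : set S) (g : okernel R L) : Prop :=
  (forall A : set (S -> E), F (~` future L) A ->
     @measurable_fun _ _ (OmegaF (past L `|` outer L)) (\bar R) setT (fun w => g w A)) /\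
  (forall A : set (S -> E), F L A ->
     @measurable_fun _ _ (OmegaF (past L)) (\bar R) setT (fun w => g w A)) /\
  (forall B : set (S -> E), F (past L `|` outer L) B ->
     forall w, g w B = (\1_B w)%:E).

Definition okcomp (R : realType) (D L : set S) (gD : okernel R D) (gL : okernel R L)
  (A : set (S -> E)) (w : S -> E) : \bar R :=
  (\int[gD w]_(s in setT) gL s A)%E.
End Configs.

From HB Require Import structures.
From mathcomp Require Import all_boot all_order all_algebra.
From mathcomp Require Import all_classical all_reals all_analysis.
From mathcomp Require Import measurable_realfun.
Import Order.TTheory GRing.Theory Num.Theory.
Set Implicit Arguments. Unset Strict Implicit. Unset Printing Implicit Defensive.
Local Open Scope classical_set_scope.

(* F_{S \ Γ_+} is generated by the π-system of rectangles C1 ∩ C2 ∩ C3 with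
   C1 ∈ F_Δ, C2 ∈ F_Λ and C3 ∈ F_{Γ_- ∪ Γ^*}, since S \ Γ_+ = Γ ∪ Γ_- ∪ Γ^*.
   A proper kernel γ_Λ(·, ω) is the point mass at ω on F_{Λ_- ∪ Λ^*}; as C1, C3
   and σ ↦ γ_Λ(C2, σ) are measurable for such σ-algebras of Δ and Λ,
     γ_Δ γ_Λ (C1 ∩ C2 ∩ C3, ω) = 1_{C3}(ω) γ_Δ(C1, ω) γ_Λ(C2, ω).
   This is symmetric in Δ and Λ and has the measurability required of a proper
   kernel on Γ; the π-λ theorem extends both facts to all of F_{S \ Γ_+}. *)

Section TimeSets.
Context {dS : Order.disp_t} {S : porderType dS}.
Implicit Types (U V D L : set S) (x y : S).

Lemma sub_outer_sym U V : U `<=` outer V -> V `<=` outer U.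
Proof. by move=> UV x Vx y Uy; rewrite comparable_sym; exact: UV. Qed.

Lemma sub_outer_nlt U V x y : U `<=` outer V -> U x -> V y -> ~ (x < y)%O.
Proof. by move=> UV Ux Vy /lt_comparable; apply/negP/UV. Qed.

Lemma setC_future_sub U : ~` future U `<=` U `|` (past U `|` outer U).
Proof.
move=> x nfUx; have [Ux|nUx] := pselect (U x); first by left.
have [[y [Uy]]|] := pselect (exists y, U y /\ (x >=< y)%O); last first.
  by move=> nc; right; right => y Uy; apply/negP => xy; apply: nc; exists y.
case/comparable_ltgtP => [xy|yx|exy].
- by right; left; split => //; exists y.
- by exfalso; apply: nfUx; split => //; exists y.
- by rewrite exy in nUx.
Qed.

Lemma setC_future U : past U `&` future U = set0 ->
  ~` future U = U `|` (past U `|` outer U).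
Proof.
move=> tbU; apply/seteqP; split; first exact: setC_future_sub.
move=> x [Ux|[pUx|oUx]] fUx; first by case: fUx.
  by rewrite -[False]/(set0 x) -tbU.
case: fUx => _ [y [Uy /lt_comparable yx]].
by move/negP: (oUx y Uy); rewrite comparable_sym.
Qed.

(* [past] and [future] are [reach] along [<] and along its converse. *)
Definition reach (r : S -> S -> Prop) U : set S :=
  [set x | ~ U x /\ exists y, U y /\ r x y].

Lemma reachU (r : S -> S -> Prop) D L :
  (forall x y, D x -> L y -> ~ r x y /\ ~ r y x) ->
  reach r (D `|` L) = reach r D `|` reach r L.
Proof.
move=> DLr; apply/seteqP; split => x.
  move=> [nDLx [y [[Dy|Ly] xy]]]; [left|right]; split; try by exists y.
  - by move=> Dx; apply: nDLx; left.
  - by move=> Lx; apply: nDLx; right.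
move=> [[nDx [y [Dy xy]]]|[nLx [y [Ly xy]]]]; split.
- by case=> // Lx; case: (DLr y x Dy Lx).
- by exists y; split => //; left.
- by case=> // Dx; case: (DLr x y Dx Ly).
- by exists y; split => //; right.
Qed.

Section OuterPair.
Variables D L : set S.
Hypothesis DL : D `<=` outer L.

Let DL_nlt x y : D x -> L y -> ~ (x < y)%O /\ ~ (y < x)%O.
Proof.
move=> Dx Ly; split; first exact: sub_outer_nlt DL Dx Ly.
exact: sub_outer_nlt (sub_outer_sym DL) Ly Dx.
Qed.

Lemma pastU : past (D `|` L) = past D `|` past L.
Proof. by apply: (@reachU (fun x y => x < y)%O) => x y Dx Ly; exact: DL_nlt. Qed.

Lemma futureU : future (D `|` L) = future D `|` future L.
Proof. by apply: (@reachU (fun x y => y < x)%O) => x y Dx Ly; case: (DL_nlt Dx Ly). Qed.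

Lemma pastI_future : past D `&` future L = set0.
Proof.
apply/seteqP; split => // x [[_ [y [Dy xy]]] [_ [z [Lz zx]]]].
by case: (DL_nlt Dy Lz) => _; apply; exact: lt_trans xy.
Qed.

End OuterPair.

Lemma past_sub_past_outer D L : D `<=` outer L -> past L `<=` past D `|` outer D.
Proof.
move=> DL x pLx; have fDx : ~ future D x.
  by move=> fDx; rewrite -[False]/(set0 x) -(pastI_future (sub_outer_sym DL)).
have [Dx|[]] := setC_future_sub fDx; [|by left|by right].
by case: pLx => _ [y [Ly /(sub_outer_nlt DL Dx Ly)]].
Qed.

Lemma pastU_outerU_sub D L : D `<=` outer L ->
  past (D `|` L) `|` outer (D `|` L) `<=` past D `|` outer D.
Proof.
move=> DL x [|oDLx].
  by rewrite (pastU DL) => -[pDx|/(past_sub_past_outer DL)//]; left.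
by right => y Dy; apply: oDLx; left.
Qed.

Lemma time_boxU D L :
  time_box D -> time_box L -> D `<=` outer L -> time_box (D `|` L).
Proof.
move=> [fD tbD] [fL tbL] DL; split; first by rewrite finite_setU.
(* [time_box] is stated with the lattice meet of [set S], convertible to [setI]. *)
rewrite !meetEset in tbD tbL *.
rewrite (pastU DL) (futureU DL) setIUl !setIUr tbD tbL (pastI_future DL).
by rewrite (pastI_future (sub_outer_sym DL)) !setU0.
Qed.

End TimeSets.

Section ProbabilityFacts.
Context {d d' : measure_display} {T : measurableType d} {T' : measurableType d'}
  {R : realType}.
Local Open Scope ereal_scope.

Lemma probability_setD_sub (P : probability T R) (A B : set T) :
  measurable A -> measurable B -> B `<=` A -> P (A `\` B) = P A - P B.
Proof.
move=> mA mB BA; rewrite measureD // ?(setIidr BA) //.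
exact: le_lt_trans (probability_le1 _ mA) (ltry 1).
Qed.

Lemma lambda_system_measurable_eval (P : T' -> probability T R) :
  lambda_system setT [set A | measurable A /\ measurable_fun setT (fun w => P w A)].
Proof.
split => //.
- split; first exact: measurableT.
  rewrite (_ : (fun w => P w setT) = cst 1); first exact: measurable_cst.
  by apply/funext => w; exact: probability_setT.
- move=> A B BA [mA mPA] [mB mPB]; split; first exact: measurableD.
  rewrite (_ : (fun w => P w (A `\` B)) = (fun w => P w A - P w B)).
    exact: emeasurable_funB.
  by apply/funext => w; rewrite probability_setD_sub.
- move=> G ndG mG; split; first by apply: bigcupT_measurable => i; case: (mG i).
  apply: (emeasurable_fun_cvg (fun n w => P w (G n))); first by move=> n; case: (mG n).
  move=> w _; apply: nondecreasing_cvg_mu => //; first by move=> i; case: (mG i).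
  by apply: bigcupT_measurable => i; case: (mG i).
Qed.

Lemma probability_setI_indic (P : probability T R) (B C : set T) (w : T) :
  measurable B -> measurable C -> P B = (\1_B w)%:E -> P (C `&` B) = (\1_B w)%:E * P C.
Proof.
move=> mB mC PB; have [Bw|nBw] := pselect (B w).
  rewrite indicE mem_set // mul1e in PB *.
  have PnB : P (~` B) = 0 by rewrite probability_setC // PB subee.
  have PCB0 : P (C `\` B) = 0.
    exact: subset_measure0 (measurableD mC mB) (measurableC mB) (@subIsetr _ _ _) PnB.
  transitivity (P (C `\` B) + P (C `&` B)); first by rewrite PCB0 add0e.
  exact/esym/measureDI.
rewrite indicE memNset // mul0e in PB *.
exact: subset_measure0 (measurableI _ _ mC mB) mB (@subIsetr _ _ _) PB.
Qed.

End ProbabilityFacts.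

Section Cylinders.
Context {dS : Order.disp_t} {S : porderType dS} {dE : measure_display}
  {E : measurableType dE}.
Implicit Types (U V : set S) (A C : set (S -> E)).
Local Notation F := (@F _ S _ E).
Local Notation OmegaF := (@OmegaF _ S _ E).

Lemma F_subset U V : U `<=` V -> F U `<=` F V.
Proof.
move=> UV; apply: smallest_sub; first exact: smallest_sigma_algebra.
move=> _ [x [B [Ux [mB ->]]]]; apply: sub_sigma_algebra.
by exists x, B; split => //; exact: UV.
Qed.

Lemma measurable_fun_F_subset {R : realType} U V (f : (S -> E) -> \bar R) :
  U `<=` V -> @measurable_fun _ _ (OmegaF U) (\bar R) setT f ->
  @measurable_fun _ _ (OmegaF V) (\bar R) setT f.
Proof. by move=> UV mf _ Y mY; apply: F_subset UV _ (mf measurableT Y mY). Qed.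

Definition rectangles U1 U2 U3 : set (set (S -> E)) :=
  [set A | exists C1 C2 C3, [/\ F U1 C1, F U2 C2, F U3 C3 & A = C1 `&` C2 `&` C3]].

Lemma rectangles_setI_closed U1 U2 U3 : setI_closed (rectangles U1 U2 U3).
Proof.
move=> _ _ [C1 [C2 [C3 [m1 m2 m3 ->]]]] [C1' [C2' [C3' [m1' m2' m3' ->]]]].
exists (C1 `&` C1'), (C2 `&` C2'), (C3 `&` C3').
split; try exact: (@measurableI _ (OmegaF _)).
by rewrite setIACA (setIACA C1).
Qed.

Lemma rectangles_sub_F U1 U2 U3 : rectangles U1 U2 U3 `<=` F (U1 `|` U2 `|` U3).
Proof.
move=> _ [C1 [C2 [C3 [m1 m2 m3 ->]]]].
apply: (@measurableI _ (OmegaF _)); first apply: (@measurableI _ (OmegaF _)).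
- by apply: F_subset m1 => x U1x; left; left.
- by apply: F_subset m2 => x U2x; left; right.
- by apply: F_subset m3 => x U3x; right.
Qed.

Lemma F_setU3_sub U1 U2 U3 : F (U1 `|` U2 `|` U3) `<=` <<s rectangles U1 U2 U3 >>.
Proof.
apply: smallest_sub; first exact: smallest_sigma_algebra.
move=> _ [x [B [Ux [mB ->]]]]; apply: sub_sigma_algebra.
set X := (fun w : S -> E => w x) @^-1` B.
have cyl U : U x -> F U X by move=> Ux'; apply: sub_sigma_algebra; exists x, B.
have FT U : F U [set: S -> E] := @measurableT _ (OmegaF U).
case: Ux => [[/cyl m1|/cyl m2]|/cyl m3].
- by exists X, setT, setT; split => //; rewrite !setIT.
- by exists setT, X, setT; split => //; rewrite setIT setTI.
- by exists setT, setT, X; split => //; rewrite !setTI.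
Qed.

Lemma F_setU3_lambda U1 U2 U3 (H : set (set (S -> E))) : lambda_system setT H ->
  rectangles U1 U2 U3 `<=` H -> F (U1 `|` U2 `|` U3) `<=` H.
Proof.
move=> lH rH A /F_setU3_sub; apply: lambda_system_subset => //.
exact: rectangles_setI_closed.
Qed.

Lemma lambda_system_eq_probability {R : realType} V V1 V2
    (P1 : probability (OmegaF V1) R) (P2 : probability (OmegaF V2) R) :
  F V `<=` F V1 -> F V `<=` F V2 ->
  lambda_system setT [set A : set (S -> E) | F V A /\ P1 A = P2 A].
Proof.
move=> VV1 VV2; split => //.
- by split; [exact: (@measurableT _ (OmegaF V))|rewrite !probability_setT].
- move=> A B BA [mA P12A] [mB P12B]; split; first exact: (@measurableD _ (OmegaF V)).
  rewrite (probability_setD_sub P1 (VV1 _ mA) (VV1 _ mB) BA).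
  by rewrite (probability_setD_sub P2 (VV2 _ mA) (VV2 _ mB) BA) P12A P12B.
- move=> G ndG mG; have mUG : F V (\bigcup_i G i).
    by apply: (@bigcupT_measurable _ (OmegaF V)) => i; case: (mG i).
  split => //; have mG1 i : F V1 (G i) by apply: VV1; case: (mG i).
  have mG2 i : F V2 (G i) by apply: VV2; case: (mG i).
  have := nondecreasing_cvg_mu (mu := P2) mG2 (VV2 _ mUG) ndG.
  rewrite (_ : P2 \o G = P1 \o G); last by apply/funext => i /=; case: (mG i).
  exact: cvg_unique _ (nondecreasing_cvg_mu (mu := P1) mG1 (VV1 _ mUG) ndG).
Qed.

End Cylinders.

Section ProperKernel.
Context {dS : Order.disp_t} {S : porderType dS} {dE : measure_display}
  {E : measurableType dE} {R : realType}.
Local Open Scope ereal_scope.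
Local Notation F := (@F _ S _ E).
Local Notation OmegaF := (@OmegaF _ S _ E).
Local Notation F_measurable U f := (@measurable_fun _ _ (OmegaF U) (\bar R) setT f).

Lemma F_measurable_indic U B : F U B -> F_measurable U (fun s => (\1_B s)%:E).
Proof. by move=> mB; apply/measurable_EFinP; exact: (@measurable_indic _ (OmegaF U)). Qed.

Variables (L : set S) (g : @okernel _ S _ E R L).
Hypotheses (tbL : past L `&` future L = set0) (Hg : proper_okernel g).

Let past_outer_sub : past L `|` outer L `<=` ~` future L.
Proof. by rewrite setC_future //; exact: subsetUr. Qed.

Lemma okernel_setI_indic B C s : F (past L `|` outer L) B -> F (~` future L) C ->
  g s (C `&` B) = (\1_B s)%:E * g s C.
Proof.
move=> mB mC; apply: probability_setI_indic => //; last exact: Hg.2.2.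
exact (F_subset past_outer_sub mB).
Qed.

Lemma okernel_ae_const (f : (S -> E) -> \bar R) w :
  F_measurable (past L `|` outer L) f -> {ae g w, forall s, f s = f w}.
Proof.
move=> mf; have mN : F (past L `|` outer L) (~` [set s | f s = f w]).
  apply: (@measurableC _ (OmegaF _)).
  by have := mf measurableT _ (emeasurable_set1 (f w)); rewrite setTI.
apply/negligibleP; first exact (F_subset past_outer_sub mN).
apply: eq_trans (Hg.2.2 _ mN w) _.
by rewrite indicE memNset //= => /(_ erefl).
Qed.

Lemma okernel_measurable U A : U `<=` past L `|` outer L -> F (L `|` U) A ->
  F_measurable (past L `|` U) (fun s => g s A).
Proof.
move=> UL; rewrite -{1}(setUid U) setUA => mA.
suff [] : [set A | F (~` future L) A /\
  F_measurable (past L `|` U) (fun s => g s A)] A by [].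
apply: F_setU3_lambda mA.
  exact: (@lambda_system_measurable_eval _ _ _ (OmegaF (past L `|` U)) _ g).
move=> _ [C1 [C2 [C3 [m1 m2 m3 ->]]]].
have LUU : L `|` U `|` U `<=` ~` future L.
  by rewrite setC_future // -setUA setUid; apply: setUS.
split; first by refine (F_subset LUU _); apply: rectangles_sub_F; exists C1, C2, C3.
have m23 : F U (C2 `&` C3) := @measurableI _ (OmegaF _) _ _ m2 m3.
rewrite (_ : (fun s => _) = fun s => (\1_(C2 `&` C3) s)%:E * g s C1); last first.
  apply/funext => s; rewrite -setIA; apply: okernel_setI_indic.
  - exact (F_subset UL m23).
  - by apply: F_subset m1; rewrite setC_future //; exact: subsetUl.
apply: emeasurable_funM.
  by apply: measurable_fun_F_subset (F_measurable_indic m23); exact: subsetUr.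
by apply: measurable_fun_F_subset (Hg.2.1 _ m1); exact: subsetUl.
Qed.

End ProperKernel.

Section Composition.
Context {dS : Order.disp_t} {S : porderType dS} {dE : measure_display}
  {E : measurableType dE} {R : realType}.
Local Open Scope ereal_scope.
Local Notation F := (@F _ S _ E).
Local Notation OmegaF := (@OmegaF _ S _ E).
Local Notation F_measurable U f := (@measurable_fun _ _ (OmegaF U) (\bar R) setT f).

Variables (D L : set S) (gD : @okernel _ S _ E R D) (gL : @okernel _ S _ E R L).
Hypotheses (tbD : time_box D) (tbL : time_box L) (DL : D `<=` outer L).
Hypotheses (HgD : proper_okernel gD) (HgL : proper_okernel gL).

Let LD : L `<=` outer D := sub_outer_sym DL.

Let setC_futureD : ~` future D = D `|` (past D `|` outer D) := setC_future tbD.2.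
Let setC_futureL : ~` future L = L `|` (past L `|` outer L) := setC_future tbL.2.

Let VG_subD : past (D `|` L) `|` outer (D `|` L) `<=` past D `|` outer D.
Proof. exact: pastU_outerU_sub. Qed.

Let VG_subL : past (D `|` L) `|` outer (D `|` L) `<=` past L `|` outer L.
Proof. by rewrite (setUC D L); exact: pastU_outerU_sub LD. Qed.

Let pastL_sub : past L `<=` ~` future D.
Proof. by move=> x pLx fDx; rewrite -[False]/(set0 x) -(pastI_future LD). Qed.

Lemma okcomp_integrand_measurable A : F (~` future (D `|` L)) A ->
  F_measurable (~` future D) (fun s => gL s A).
Proof.
rewrite (futureU DL) setCU => mA; set W := ~` future D `&` ~` future L `&` ~` L.
have WL : W `<=` past L `|` outer L.
  by move=> x [[_]]; rewrite setC_futureL => -[].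
apply: measurable_fun_F_subset (okernel_measurable tbL.2 HgL WL _).
  by rewrite subUset; split; last by move=> x [[]].
apply: F_subset mA => x nfx; have [Lx|nLx] := pselect (L x); [by left|by right].
Qed.

Lemma okcomp_rect W C1 C2 C3 w :
  W `<=` past D `|` outer D -> W `<=` past L `|` outer L ->
  F D C1 -> F L C2 -> F W C3 ->
  okcomp gD gL (C1 `&` C2 `&` C3) w = (\1_C3 w)%:E * gD w C1 * gL w C2.
Proof.
move=> WD WL m1 m2 m3; set h := fun s => gL s C2.
have mh : F_measurable (past L) h := HgL.2.1 _ m2.
have m1D : F (~` future D) C1.
  by apply: F_subset m1; rewrite setC_futureD; exact: subsetUl.
have m13D : F (~` future D) (C1 `&` C3).
  apply: (@measurableI _ (OmegaF _)) m1D _.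
  by apply: F_subset m3 => x /WD; rewrite setC_futureD; right.
have m13L : F (past L `|` outer L) (C1 `&` C3).
  apply: (@measurableI _ (OmegaF _)); last exact (F_subset WL m3).
  by apply: F_subset m1 => x /DL; right.
have integrand s : gL s (C1 `&` C2 `&` C3) = (\1_(C1 `&` C3) s)%:E * h s.
  rewrite setIAC setIC (okernel_setI_indic tbL.2 HgL _ m13L) //.
  by apply: F_subset m2; rewrite setC_futureL; exact: subsetUl.
have h_ae := okernel_ae_const tbD.2 HgD w
  (measurable_fun_F_subset (past_sub_past_outer DL) mh).
have m13 : F_measurable (~` future D) (fun s => (\1_(C1 `&` C3) s)%:E).
  exact: F_measurable_indic.
rewrite /okcomp (eq_integral (fun s : OmegaF _ => (\1_(C1 `&` C3) s)%:E * h s));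
  last by move=> s _; exact: integrand.
rewrite (ae_eq_integral (fun s : OmegaF _ => (\1_(C1 `&` C3) s)%:E * h w)) //.
- rewrite ge0_integralZr // integral_indic // setIT.
  by rewrite -(okernel_setI_indic tbD.2 HgD _ (F_subset WD m3) m1D).
- exact: emeasurable_funM m13 (measurable_fun_F_subset pastL_sub mh).
- exact: emeasurable_funM m13 (measurable_cst _).
- apply: (@filterS _ _ (ae_filter_ringOfSetsType (gD w))) h_ae.
  by move=> s hs _; rewrite hs.
Qed.

Let setC_futureU_sub : ~` future (D `|` L) `<=` ~` future L.
Proof. by apply: subsetC; rewrite (futureU DL); exact: subsetUr. Qed.

Definition okcomp_at w : set (OmegaF (~` future (D `|` L))) -> \bar R :=
  fun A => okcomp gD gL A w.

Let okcomp_at0 w : okcomp_at w set0 = 0.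
Proof. by apply: integral0_eq => s _; exact: measure0. Qed.

Let okcomp_at_ge0 w A : 0 <= okcomp_at w A.
Proof. by apply: integral_ge0 => s _; exact: measure_ge0. Qed.

Let okcomp_at_sigma_additive w : semi_sigma_additive (okcomp_at w).
Proof.
move=> A mA tA mUA; rewrite [X in _ --> X](_ : _ =
    \int[gD w]_s (\sum_(n <oo) gL s (A n))); last first.
  apply: eq_integral => s _; apply/esym/cvg_lim => //.
  apply: (@measure_semi_sigma_additive _ _ _ (gL s)) => //.
  - by move=> n; apply: F_subset (mA n).
  - exact: F_subset mUA.
apply/cvg_closeP; split.
  by apply: is_cvg_nneseries => n _ _; exact: integral_ge0.
rewrite closeE // integral_nneseries // => n.
exact: okcomp_integrand_measurable (mA n).
Qed.

HB.instance Definition _ w := isMeasure.Build _ _ R (okcomp_at w)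
  (okcomp_at0 w) (okcomp_at_ge0 w) (@okcomp_at_sigma_additive w).

Let okcomp_atT w : okcomp_at w setT = 1.
Proof.
rewrite /okcomp_at /okcomp (eq_integral (cst 1)); last first.
  by move=> s _; exact: probability_setT.
by rewrite integral_cst // mul1e; exact: probability_setT.
Qed.

HB.instance Definition _ w :=
  Measure_isProbability.Build _ _ R (okcomp_at w) (okcomp_atT w).

Definition okcomp_kernel : @okernel _ S _ E R (D `|` L) := fun w => okcomp_at w.

Lemma okcomp_measurable W A : W `<=` past (D `|` L) `|` outer (D `|` L) ->
  F (D `|` L `|` W) A -> F_measurable (past (D `|` L) `|` W) (fun w => okcomp_kernel w A).
Proof.
move=> WG mA.
have WD : W `<=` past D `|` outer D := subset_trans WG VG_subD.
have WL : W `<=` past L `|` outer L := subset_trans WG VG_subL.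
suff [] : [set A | F (~` future (D `|` L)) A /\
  F_measurable (past (D `|` L) `|` W) (fun w => okcomp_kernel w A)] A by [].
apply: F_setU3_lambda mA.
  exact: (@lambda_system_measurable_eval _ _ _ (OmegaF (past (D `|` L) `|` W)) _
    okcomp_kernel).
move=> _ [C1 [C2 [C3 [m1 m2 m3 ->]]]]; split.
  have rC : rectangles D L W (C1 `&` C2 `&` C3) by exists C1, C2, C3.
  refine (F_subset _ (rectangles_sub_F rC)).
  by rewrite (setC_future (time_boxU tbD tbL DL).2); apply: setUS.
rewrite (_ : (fun w => _) = fun w => (\1_C3 w)%:E * gD w C1 * gL w C2); last first.
  by apply/funext => w; exact: okcomp_rect w WD WL m1 m2 m3.
apply: emeasurable_funM; first apply: emeasurable_funM.
- by apply: measurable_fun_F_subset (F_measurable_indic m3); exact: subsetUr.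
- apply: measurable_fun_F_subset (HgD.2.1 _ m1) => x pDx; left.
  by rewrite (pastU DL); left.
- apply: measurable_fun_F_subset (HgL.2.1 _ m2) => x pLx; left.
  by rewrite (pastU DL); right.
Qed.

Lemma proper_okcomp : proper_okernel okcomp_kernel.
Proof.
have tbG := time_boxU tbD tbL DL.
split; [|split].
- move=> A mA; rewrite (setC_future tbG.2) in mA.
  apply: measurable_fun_F_subset (okcomp_measurable (@subset_refl _ _) mA).
  by rewrite subUset; split.
- move=> A mA; rewrite -[D `|` L]setU0 in mA.
  by have := okcomp_measurable (@sub0set _ _) mA; rewrite setU0.
- move=> B mB w; transitivity (okcomp gD gL (setT `&` setT `&` B) w).
    by rewrite !setTI.
  rewrite (okcomp_rect w VG_subD VG_subL _ _ mB).
  - by rewrite !probability_setT !mule1.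
  - exact: (@measurableT _ (OmegaF D)).
  - exact: (@measurableT _ (OmegaF L)).
Qed.

End Composition.

Lemma okcomp_comm {dS : Order.disp_t} {S : porderType dS} {dE : measure_display}
    {E : measurableType dE} {R : realType} (D L : set S)
    (gD : @okernel _ S _ E R D) (gL : @okernel _ S _ E R L) :
  time_box D -> time_box L -> D `<=` outer L ->
  proper_okernel gD -> proper_okernel gL ->
  forall A w, F (~` future (D `|` L)) A -> okcomp gD gL A w = okcomp gL gD A w.
Proof.
move=> tbD tbL DL HgD HgL A w mA; have LD := sub_outer_sym DL.
set V := past (D `|` L) `|` outer (D `|` L).
have VD : V `<=` past D `|` outer D := pastU_outerU_sub DL.
have VL : V `<=` past L `|` outer L.
  by rewrite /V (setUC D L); exact: pastU_outerU_sub LD.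
pose kDL := okcomp_kernel gD tbL DL HgL; pose kLD := okcomp_kernel gL tbD LD HgD.
suff [] : [set A | F (~` future (D `|` L)) A /\ kDL w A = kLD w A] A by [].
have setC_futureG := setC_future (time_boxU tbD tbL DL).2.
rewrite setC_futureG in mA; apply: F_setU3_lambda mA.
  by apply: lambda_system_eq_probability => //; rewrite (setUC L D).
move=> _ [C1 [C2 [C3 [m1 m2 m3 ->]]]]; split.
  have rC : rectangles D L V (C1 `&` C2 `&` C3) by exists C1, C2, C3.
  by rewrite setC_futureG; exact: rectangles_sub_F rC.
rewrite /kDL /kLD /= /okcomp_at (okcomp_rect tbD tbL DL HgD HgL w VD VL m1 m2 m3).
rewrite (setIC C1 C2) (okcomp_rect tbL tbD LD HgL HgD w VL VD m2 m1 m3).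
by rewrite muleAC.
Qed.

Theorem mainTheorem17 (R : realType) (dS : Order.disp_t) (S : porderType dS)
  (dE : measure_display) (E : measurableType dE)
  (HS : @standing_assumptions dS S)
  (D L : set S) (HD : time_box D) (HL : time_box L) (HDL : D `<=` outer L)
  (gD : @okernel dS S dE E R D) (gL : @okernel dS S dE E R L)
  (HgD : proper_okernel gD) (HgL : proper_okernel gL) :
  let G := D `|` L in
  (* (i) *)
  (time_box G /\ future G = future D `|` future L /\ past G = past D `|` past L) /\
  (* (ii) well defined: the integrand is F_{S \ D_+}-measurable ... *)
  (forall A : set (S -> E), F (~` future G) A ->
     F (~` future L) A /\
     @measurable_fun _ _ (OmegaF (~` future D)) (\bar R) setT (fun s => gL s A)) /\
  (* ... and it is (the restriction to F_{S \ G_+} of) a proper oriented kernel on G *)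
  (exists gG : @okernel dS S dE E R G,
     (forall (A : set (S -> E)) (w : S -> E), F (~` future G) A ->
        gG w A = okcomp gD gL A w) /\
     proper_okernel gG) /\
  (* (iii) *)
  (countable [set: E] ->
   forall (A : set (S -> E)) (w : S -> E), F (~` future G) A ->
     okcomp gD gL A w = okcomp gL gD A w).
Proof.
move=> G; split; first by split; [exact: time_boxU|split; [exact: futureU|exact: pastU]].
split.
  move=> A mA; split; last exact: okcomp_integrand_measurable.
  by apply: F_subset mA; apply: subsetC; rewrite /G (futureU HDL); exact: subsetUr.
split; first by exists (okcomp_kernel gD HL HDL HgL); split; last exact: proper_okcomp.
by move=> _; exact: okcomp_comm.
Qed.
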